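(* The cycle $C_5$ is the only connected graph $G$ without a triangle $K_3$ as a subgraph for which $\chi(G)=3$ and $\mathrm{sn}(G)=n-2$, where $n$ is the order of $G$.
   Context: All graphs are finite and simple. For a graph $G=(V,E)$ with $k=\chi(G)$, a proper $k$-colouring is a map $c:V\to[k]$ with $c(u)\neq c(v)$ for every edge $uv$. A set $S\subseteq V$ is a determining set for $(G,c)$ if there is no proper $k$-colouring $c'\neq c$ with $c'(s)=c(s)$ for all $s\in S$; a critical set is an inclusion-minimal determining set. $\mathrm{sn}(G)$ is the minimum size of a critical set over all proper $\chi(G)$-colourings $c$ of $G$ (equivalently, the minimum number of vertices coloured in a partial colouring that extends uniquely to a proper $\chi(G)$-colouring). *)

(* A finite simple graph is a finType T with a symmetric,
   irreflexive adjacency relation e : rel T. *)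
From mathcomp Require Import all_boot.
Set Implicit Arguments. Unset Strict Implicit. Unset Printing Implicit Defensive.

Section Graphs.
Variables (T : finType) (e : rel T).

Definition proper_colouring (k : nat) (c : {ffun T -> 'I_k}) : bool :=
  [forall u, forall v, e u v ==> (c u != c v)].

Definition is_chromatic_number (k : nat) : Prop :=
  (exists c : {ffun T -> 'I_k}, proper_colouring c) /\
  (forall j, j < k -> forall c : {ffun T -> 'I_j}, ~~ proper_colouring c).

Definition determining (k : nat) (c : {ffun T -> 'I_k}) (S : {set T}) : bool :=
  [forall c' : {ffun T -> 'I_k},
     (proper_colouring c' && [forall s in S, c' s == c s]) ==> (c' == c)].

Definition critical (k : nat) (c : {ffun T -> 'I_k}) (S : {set T}) : bool :=
  determining c S && [forall S' : {set T}, (S' \proper S) ==> ~~ determining c S'].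

Definition is_sn (m : nat) : Prop :=
  exists k, is_chromatic_number k /\
    (exists (c : {ffun T -> 'I_k}) (S : {set T}),
        proper_colouring c /\ critical c S /\ #|S| = m) /\
    (forall (c : {ffun T -> 'I_k}) (S : {set T}),
        proper_colouring c -> critical c S -> m <= #|S|).

Definition connected_graph : Prop := forall x y : T, connect e x y.

Definition triangle_free : Prop := forall x y z : T, ~ [&& e x y, e y z & e x z].

End Graphs.

Definition C5_adj : rel 'I_5 :=
  fun i j => (val j == (val i).+1 %% 5) || (val i == (val j).+1 %% 5).

Definition isomorphic_to_C5 (T : finType) (e : rel T) : Prop :=
  exists f : T -> 'I_5, bijective f /\ forall x y, e x y = C5_adj (f x) (f y).

From mathcomp Require Import all_boot perm zify.
From Stdlib Require Import Classical.

(* A proper 3-colouring c together with three vertices U such that c is the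
   only proper 3-colouring agreeing with c off U makes V - U a determining set,
   so sn(G) <= n - 3.  Such a forced triple exists in every connected
   triangle-free non-bipartite graph with at least six vertices, by induction
   on the order.  If deleting some vertex v of degree at most two leaves a
   non-bipartite graph, the triple comes from the non-bipartite component of
   G - v together with v (or, when G - v is a 5-cycle, from an explicit
   colouring), and the colouring extends to v.  Otherwise, either the minimum
   degree is at least three, and in a 3-colouring with a smallest third colour
   class, three vertices of that class or three neighbours of one of them are
   forced by their neighbourhoods; or a vertex p of degree two with G - p
   bipartite yields an explicit colouring in which p and one further vertex
   take the third colour.  Hence sn(G) = n - 2 forces n = 5, and the only
   triangle-free non-bipartite graph on five vertices is C5.  Conversely, no
   two vertices determine a proper 3-colouring of C5, as a check of its 30
   colourings shows, while three suitable ones do. *)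

Set Implicit Arguments. Unset Strict Implicit. Unset Printing Implicit Defensive.

(** * The cycle C5 and its colourings *)

Notation C5v k := (@Ordinal 5 k isT).

Definition col0 : 'I_3 := @Ordinal 3 0 isT.
Definition col1 : 'I_3 := @Ordinal 3 1 isT.
Definition col2 : 'I_3 := @Ordinal 3 2 isT.

Lemma ord3_other (a b d z : 'I_3) :
  a != b -> a != d -> b != d -> z != a -> z != b -> z = d.
Proof.
case: a b d z => [a ?] [b ?] [d ?] [z ?]; rewrite -!val_eqE /= => *.
by apply/val_inj => /=; lia.
Qed.

Lemma ord3_avoid2 (a b : 'I_3) : exists k : 'I_3, k != a /\ k != b.
Proof.
have /subsetPn[k _] : ~~ ([set: 'I_3] \subset [set a; b]).
  apply/negP => /subset_leq_card; rewrite cardsT card_ord cards2.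
  by case: (a != b).
by rewrite !inE negb_or => /andP[ka kb]; exists k.
Qed.

Lemma col1_flip (a b : 'I_3) : a != col2 -> b != col2 -> a != b -> (a == col1) != (b == col1).
Proof. by case: a b => [[|[|[|?]]] ?] [[|[|[|?]]] ?]. Qed.

Lemma ord5_ind (P : 'I_5 -> Prop) :
  P (C5v 0) -> P (C5v 1) -> P (C5v 2) -> P (C5v 3) -> P (C5v 4) -> forall i, P i.
Proof.
move=> P0 P1 P2 P3 P4 [m lt].
by case: m lt => [|[|[|[|[|m]]]]] lt //; rewrite (bool_irrelevance lt isT).
Qed.

Definition rot5 (k i : 'I_5) : 'I_5 := Ordinal (ltn_pmod (i + k) (isT : 0 < 5)).

Lemma rot5_ord0 k : rot5 k ord0 = k.
Proof. by apply/val_inj; rewrite /= add0n modn_small. Qed.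

Lemma C5_adj_rot5 k i j : C5_adj (rot5 k i) (rot5 k j) = C5_adj i j.
Proof. by case: k i j => [[|[|[|[|[|?]]]]] ?] [[|[|[|[|[|?]]]]] ?] [[|[|[|[|[|?]]]]] ?]. Qed.

Lemma C5_adj_rows_inj (i j : 'I_5) : C5_adj i =1 C5_adj j -> i = j.
Proof.
move=> hij; move: (hij (rot5 (C5v 1) i)) (hij (rot5 (C5v 4) i)).
case: i j {hij} => [[|[|[|[|[|?]]]]] ?] [[|[|[|[|[|?]]]]] ?] //=; try by [].
all: by move=> _ _; apply: val_inj.
Qed.

Lemma rot5_inj k : injective (rot5 k).
Proof.
by move=> i j hij; apply: C5_adj_rows_inj => l; rewrite -(C5_adj_rot5 k) hij C5_adj_rot5.
Qed.

Lemma C5_adj_sym i j : C5_adj i j = C5_adj j i.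
Proof. by case: i j => [[|[|[|[|[|?]]]]] ?] [[|[|[|[|[|?]]]]] ?]. Qed.

Lemma C5_adj_succ i : C5_adj i (rot5 (C5v 1) i).
Proof. by move: i; apply: ord5_ind. Qed.

Lemma C5_adj_cases i j : C5_adj i j -> j = rot5 (C5v 1) i \/ i = rot5 (C5v 1) j.
Proof.
move: i j; apply: ord5_ind; apply: ord5_ind => //= _;
  by [left; apply: val_inj | right; apply: val_inj].
Qed.

Definition C5_colour (i : 'I_5) : 'I_3 :=
  match val i with 0 => col0 | 1 => col1 | 2 => col0 | 3 => col2 | _ => col1 end.

Lemma C5_colour_proper i j : C5_adj i j -> C5_colour i != C5_colour j.
Proof. by case: i j => [[|[|[|[|[|?]]]]] ?] [[|[|[|[|[|?]]]]] ?]. Qed.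

Lemma C5_colour_eq_col2 i : (C5_colour i == col2) = (i == C5v 3).
Proof. by case: i => [[|[|[|[|[|?]]]]] ?]. Qed.

Section FiniteSets.
Variable T : finType.
Implicit Types A B : {set T}.

Lemma card_gt1_other A w : 1 < #|A| -> exists2 x, x \in A & x != w.
Proof.
case/card_gt1P => x [y [xA yA xy]].
by case: (eqVneq x w) => [xw|xw]; [exists y => //; rewrite -xw eq_sym | exists x].
Qed.

Lemma card_gt_notin A B : #|B| < #|A| -> exists2 x, x \in A & x \notin B.
Proof.
move=> BA; case: (boolP (A \subset B)) => [/subset_leq_card|/subsetPn[x xA xB]].
  by rewrite leqNgt BA.
by exists x.
Qed.

Lemma card_le2_pair A q : #|A| <= 2 -> q \in A -> exists2 r, r \in A & A \subset [set q; r].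
Proof.
move=> A2 qA; case: (boolP (A \subset [set q])) => [sAq|/subsetPn[r rA]].
  by exists q; rewrite ?setUid.
rewrite inE => rq; exists r => //; apply/subsetP => x xA; rewrite !inE.
apply: contraLR A2; rewrite negb_or -ltnNge => /andP[xq xr].
by apply/card_gt2P; exists x, q, r; split; split; rewrite // eq_sym.
Qed.

Lemma card_le2_sub A (a : T) : #|A| <= 2 -> exists x y, A \subset [set x; y].
Proof.
move=> A2; case: (set_0Vmem A) => [->|[x xA]]; first by exists a, a; apply: sub0set.
by have [y _ sA] := card_le2_pair A2 xA; exists x, y.
Qed.

Lemma card_le1_sub A (a : T) : #|A| <= 1 -> exists q, A \subset [set q; q].
Proof.
move=> A1; case: (set_0Vmem A) => [->|[q qA]]; first by exists a; apply: sub0set.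
by exists q; rewrite setUid; apply/subsetP => x xA; rewrite inE (card_le1_eqP A1 x q xA qA).
Qed.

Lemma card_sub2 A (a a' : T) : A \subset [set a; a'] -> #|A| <= 2.
Proof. by move/subset_leq_card/leq_trans; apply; rewrite cards2; case: (_ != _). Qed.

Lemma mem_of_card_le (s : seq T) (W : {set T}) :
  uniq s -> {subset s <= W} -> #|W| <= size s -> {subset W <= s}.
Proof.
move=> us sW Ws x xW.
have sub : [set y in s] \subset W by apply/subsetP => y; rewrite inE => /sW.
have eqc : #|[set y in s]| = #|W|.
  by apply/eqP; rewrite eqn_leq subset_leq_card //= cardsE (card_uniqP us).
by move/(subset_cardP eqc): sub => /(_ x); rewrite inE xW.
Qed.

Lemma eq_of_mem_cons_notin (z x : T) s : z \in x :: s -> z \notin s -> z = x.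
Proof. by rewrite inE => /predU1P[//|zs /negP]. Qed.

Lemma notin_set3 (x a a' a'' : T) :
  x != a -> x != a' -> x != a'' -> x \notin [set a; a'; a''].
Proof. by move=> xa xa' xa''; rewrite !inE !negb_or xa xa' xa''. Qed.

Lemma codom_nth5 (s : seq T) x0 : size s = 5 -> codom (fun i : 'I_5 => nth x0 s i) =i s.
Proof.
move=> s5 y; apply/codomP/idP => [[i ->]|ys]; first by rewrite mem_nth // s5.
have lt : index y s < 5 by rewrite -s5 index_mem.
by exists (Ordinal lt); rewrite /= nth_index.
Qed.

End FiniteSets.

Section ForcedTriples.
Variables (T : finType) (e : rel T).
Hypotheses (e_sym : symmetric e) (e_irr : irreflexive e) (tf : triangle_free e).
Implicit Types (W A B : {set T}) (c d : T -> 'I_3) (b : T -> bool) (g : 'I_5 -> T).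

Lemma edge_neq x y : e x y -> x != y.
Proof. by apply: contraTneq => ->; rewrite e_irr. Qed.

Lemma nonadj_neq z x y : e z x -> ~~ e z y -> x != y.
Proof. by move=> ezx; apply: contraNneq => <-. Qed.

Lemma tf_nonadj x y z : e x y -> e y z -> ~~ e x z.
Proof.
by move=> exy eyz; apply/negP => exz; apply: (tf (x := x) (y := y) (z := z)); rewrite exy eyz exz.
Qed.

Definition nbhd W v := [set u in W | e v u].

Lemma in_nbhd W v u : (u \in nbhd W v) = (u \in W) && e v u.
Proof. by rewrite inE. Qed.

Definition proper_on W c := forall x y, x \in W -> y \in W -> e x y -> c x != c y.

Definition bipartition W b := forall x y, x \in W -> y \in W -> e x y -> b x != b y.

Definition bipartite_on W := exists b, bipartition W b.

Definition independent A := forall x y, x \in A -> y \in A -> ~~ e x y.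

(** * Forced triples *)

Definition forced_off W c (U : {set T}) := forall c', proper_on W c' ->
  (forall x, x \in W -> x \notin U -> c' x = c x) -> forall x, x \in W -> c' x = c x.

Definition forced_triple W c :=
  proper_on W c /\ exists U : {set T}, [/\ U \subset W, #|U| = 3 & forced_off W c U].

Definition has_forced_triple W := exists c, forced_triple W c.

Definition rainbow_at W c (K : pred T) v := exists x y,
  [/\ x \in W, y \in W, e v x, e v y & [/\ K x, K y, c x != c y, c x != c v & c y != c v]].

Lemma rainbow_atI W c (K : pred T) v x y : x \in W -> y \in W -> e v x -> e v y ->
  K x -> K y -> c x != c y -> c x != c v -> c y != c v -> rainbow_at W c K v.
Proof. by move=> *; exists x, y. Qed.

Lemma rainbow_at_forced W c c' K v : proper_on W c' -> v \in W -> rainbow_at W c K v ->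
  (forall x, x \in W -> K x -> c' x = c x) -> c' v = c v.
Proof.
move=> pc' vW [x [y [xW yW evx evy [Kx Ky dxy dxv dyv]]]] agree.
apply: (ord3_other dxy dxv dyv).
- by rewrite -(agree x xW Kx); apply: pc'.
- by rewrite -(agree y yW Ky); apply: pc'.
Qed.

Lemma forced_triple_chain W c f1 f2 f3 : proper_on W c ->
  f1 \in W -> f2 \in W -> f3 \in W -> f1 != f2 -> f1 != f3 -> f2 != f3 ->
  rainbow_at W c (fun x => x \notin [set f1; f2; f3]) f1 ->
  rainbow_at W c (fun x => (x \notin [set f1; f2; f3]) || (x == f1)) f2 ->
  rainbow_at W c (fun x => (x \notin [set f1; f2; f3]) || (x == f1) || (x == f2)) f3 ->
  forced_triple W c.
Proof.
move=> pc f1W f2W f3W n12 n13 n23 w1 w2 w3; split=> //.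
exists [set f1; f2; f3]; split.
- by apply/subsetP => x; rewrite !inE -orbA => /or3P[] /eqP->.
- by rewrite -setUA cardsU1 cards2 !inE negb_or n12 n13 n23.
move=> c' pc' agree.
have e1 : c' f1 = c f1 by apply: (rainbow_at_forced pc' f1W w1) => x /agree.
have e2 : c' f2 = c f2.
  by apply: (rainbow_at_forced pc' f2W w2) => x xW /orP[/(agree x xW)|/eqP->].
have e3 : c' f3 = c f3.
  apply: (rainbow_at_forced pc' f3W w3) => x xW.
  by case/orP=> [/orP[/(agree x xW)|/eqP->]|/eqP->].
move=> x xW; case: (boolP (x \in [set f1; f2; f3])) => [|/(agree x xW)//].
by rewrite !inE -orbA => /or3P[] /eqP->.
Qed.

Lemma forced_triple_outside W c f1 f2 f3 : proper_on W c ->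
  f1 \in W -> f2 \in W -> f3 \in W -> f1 != f2 -> f1 != f3 -> f2 != f3 ->
  (forall f, f \in [set f1; f2; f3] ->
     rainbow_at W c (fun x => x \notin [set f1; f2; f3]) f) ->
  forced_triple W c.
Proof.
move=> pc f1W f2W f3W n12 n13 n23 rb.
have weak f (K : pred T) : f \in [set f1; f2; f3] ->
    (forall x, x \notin [set f1; f2; f3] -> K x) -> rainbow_at W c K f.
  move=> fU sK; have [x [y [xW yW efx efy [Kx Ky cxy cxf cyf]]]] := rb f fU.
  by exists x, y; split => //; split => //; apply: sK.
apply: (forced_triple_chain (f1 := f1) (f2 := f2) (f3 := f3) pc) => //; apply: weak.
all: by rewrite ?inE ?eqxx ?orbT // => x ->.
Qed.

Lemma forced_triple_eq_on W c c' : {in W, c =1 c'} -> forced_triple W c' -> forced_triple W c.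
Proof.
move=> cc' [pc' [U [sUW cardU fU]]]; split.
  by move=> x y xW yW exy; rewrite !cc' //; apply: pc'.
exists U; split=> // c'' pc'' agree x xW.
by rewrite cc' //; apply: fU => // y yW yU; rewrite agree // cc'.
Qed.

Lemma forced_triple_sub W W' c : W' \subset W -> proper_on W c ->
  forced_triple W' c -> forced_triple W c.
Proof.
move=> sW pc [_ [U [sUW' cardU fU]]]; split=> //.
exists U; split=> //; first exact: subset_trans sW.
move=> c' pc' agree x xW; case: (boolP (x \in W')) => xW'.
  apply: fU => //.
    by move=> y z yW' zW'; apply: pc'; apply: (subsetP sW).
  by move=> y yW'; apply: agree; apply: (subsetP sW).
by apply: agree => //; apply: contra xW'; apply: (subsetP sUW').
Qed.

(** * Small non-bipartite sets *)

Lemma bipartite_on_sub W1 W2 : W1 \subset W2 -> bipartite_on W2 -> bipartite_on W1.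
Proof. by move=> sW [b hb]; exists b => x y xW yW; apply: hb; apply: (subsetP sW). Qed.

Lemma bipartite_on_cover W A B :
  W \subset A :|: B -> independent A -> independent B -> bipartite_on W.
Proof.
move=> sW iA iB; exists (fun x => x \in A) => x y xW yW exy.
have inB z : z \in W -> z \notin A -> z \in B.
  by move=> /(subsetP sW); rewrite inE => /orP[->|].
case xA: (x \in A); case yA: (y \in A) => //=.
- by move: (iA x y xA yA); rewrite exy.
- by move: (iB x y (inB x xW (negbT xA)) (inB y yW (negbT yA))); rewrite exy.
Qed.

Lemma independent2 u1 u2 : ~~ e u1 u2 -> independent [set u1; u2].
Proof. by move=> n12 x y; rewrite !inE => /orP[]/eqP-> /orP[]/eqP->; rewrite ?e_irr // e_sym. Qed.

Lemma independent3 u1 u2 u3 :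
  ~~ e u1 u2 -> ~~ e u1 u3 -> ~~ e u2 u3 -> independent [set u1; u2; u3].
Proof.
move=> n12 n13 n23 x y; rewrite !inE -!orbA.
by move=> /or3P[]/eqP-> /or3P[]/eqP->; rewrite ?e_irr // e_sym.
Qed.

Lemma nonbip_nonempty W : ~ bipartite_on W -> exists v, v \in W.
Proof.
move=> nbW; case: (set_0Vmem W) => [W0|[v vW]]; last by exists v.
by case: nbW; exists xpredT => x y; rewrite W0 inE.
Qed.

Lemma bipartite_on_extend W v q r b : v \in W -> nbhd W v \subset [set q; r] ->
  bipartition (W :\ v) b -> b q = b r -> bipartite_on W.
Proof.
move=> vW sN hb bqr; exists (fun x => if x == v then ~~ b q else b x).
have nbr_v z : z \in W -> e v z -> z != v /\ b z = b q.
  move=> zW evz; split; first by rewrite eq_sym edge_neq.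
  have : z \in [set q; r] by apply: (subsetP sN); rewrite in_nbhd zW.
  by rewrite !inE => /orP[]/eqP->.
move=> x y xW yW exy.
case: (eqVneq x v) => [exv|xv]; case: (eqVneq y v) => [eyv|yv].
- by move: exy; rewrite exv eyv e_irr.
- by subst x; case: (nbr_v y yW exy) => _ ->; case: (b q).
- by subst y; rewrite e_sym in exy; case: (nbr_v x xW exy) => _ ->; case: (b q).
- by apply: hb; rewrite // !inE ?xv ?yv.
Qed.

Lemma nonbip_del_low W v : v \in W -> #|nbhd W v| <= 1 ->
  ~ bipartite_on W -> ~ bipartite_on (W :\ v).
Proof.
move=> vW dv nbW [b hb]; have [q sN] := card_le1_sub v dv.
exact: nbW (bipartite_on_extend vW sN hb _).
Qed.

Lemma odd5_nonbip W v0 v1 v2 v3 v4 :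
  v0 \in W -> v1 \in W -> v2 \in W -> v3 \in W -> v4 \in W ->
  e v0 v1 -> e v1 v2 -> e v2 v3 -> e v3 v4 -> e v4 v0 -> ~ bipartite_on W.
Proof.
move=> h0 h1 h2 h3 h4 e01 e12 e23 e34 e40 [b hb].
move: (hb _ _ h0 h1 e01) (hb _ _ h1 h2 e12) (hb _ _ h2 h3 e23) (hb _ _ h3 h4 e34).
by move: (hb _ _ h4 h0 e40); case: (b v0); case: (b v1); case: (b v2); case: (b v3); case: (b v4).
Qed.

Lemma small_min_deg2_bipartite W v : (forall u, u \in W -> 1 < #|nbhd W u|) ->
  v \in W -> #|W| <= 4 -> bipartite_on W.
Proof.
move=> deg vW W4; have /card_gt1P[a [b [aN bN ab]]] := deg v vW.
move: aN bN; rewrite !in_nbhd => /andP[aW eva] /andP[bW evb].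
have [a2] := card_gt1_other v (deg a aW); rewrite in_nbhd => /andP[a2W eaa2] a2v.
have nab : ~~ e a b by apply: (tf_nonadj (y := v)); rewrite // e_sym.
have nva2 : ~~ e v a2 := tf_nonadj eva eaa2.
have sW : {subset W <= [:: v; a; b; a2]}.
  apply: mem_of_card_le => //; last by move=> x; rewrite !inE => /or4P[]/eqP->.
  rewrite /= !inE !negb_or edge_neq // edge_neq // eq_sym a2v ab edge_neq //=.
  by rewrite eq_sym (nonadj_neq eaa2 nab).
apply: (bipartite_on_cover (A := [set a; b]) (B := [set v; a2])).
- apply/subsetP => x /sW; rewrite !inE => /or4P[]/eqP->; by rewrite !eqxx ?orbT.
- exact: independent2.
- exact: independent2.
Qed.

Lemma nonbip_card_ge5 W : ~ bipartite_on W -> 5 <= #|W|.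
Proof.
have [n] := ubnP #|W|; elim: n W => // n IH W /ltnSE-Wn nbW.
have [v vW] := nonbip_nonempty nbW.
case: (classic (exists2 u, u \in W & #|nbhd W u| <= 1)) => [[u uW du]|deg].
  have ltW : #|W :\ u| < #|W| by rewrite (cardsD1 u W) uW.
  exact: leq_trans (IH _ (leq_trans ltW Wn) (nonbip_del_low uW du nbW)) (ltnW ltW).
rewrite leqNgt; apply/negP => W4; apply: nbW.
apply: (small_min_deg2_bipartite _ vW W4) => u uW.
by rewrite ltnNge; apply/negP => du; apply: deg; exists u.
Qed.

Definition cycle5 g := forall i j, e (g i) (g j) = C5_adj i j.

Lemma cycle5_of_path v0 v1 v2 v3 v4 :
  e v0 v1 -> e v1 v2 -> e v2 v3 -> e v3 v4 -> e v0 v4 ->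
  ~~ e v0 v2 -> ~~ e v0 v3 -> ~~ e v1 v3 -> ~~ e v1 v4 -> ~~ e v2 v4 ->
  cycle5 (fun i => nth v0 [:: v0; v1; v2; v3; v4] i).
Proof.
move=> e01 e12 e23 e34 e04 /negbTE n02 /negbTE n03 /negbTE n13 /negbTE n14 /negbTE n24 i j.
wlog ij : i j / i <= j.
  by move=> H; case: (leqP i j) => [/H//|/ltnW/H]; rewrite e_sym C5_adj_sym.
by case: i j ij => [[|[|[|[|[|?]]]]] ?] [[|[|[|[|[|?]]]]] ?] //= _; rewrite ?e_irr.
Qed.

Lemma cycle5_inj g : cycle5 g -> injective g.
Proof. by move=> cg i j gij; apply: C5_adj_rows_inj => k; rewrite -!cg gij. Qed.

Lemma cycle5_rot g k : cycle5 g -> cycle5 (g \o rot5 k).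
Proof. by move=> cg i j; rewrite /= cg C5_adj_rot5. Qed.

Lemma codom_rot5 g k : codom (g \o rot5 k) =i codom g.
Proof.
move=> x; apply/codomP/codomP => [[i ->]|[i ->]]; first by exists (rot5 k i).
have /codomP[j ->] := inj_card_onto (@rot5_inj k) (leqnn #|'I_5|) i.
by exists j.
Qed.

Lemma four_cycle_plus_one_bipartite W v a w a2 x : {subset W <= [:: x; v; a; w; a2]} ->
  e v a -> e v w -> e a a2 -> e w a2 -> bipartite_on W.
Proof.
move=> sW eva evw eaa2 ewa2.
have naw : ~~ e a w by apply: (tf_nonadj (y := v)); rewrite // e_sym.
have nva2 : ~~ e v a2 := tf_nonadj eva eaa2.
have cover A B : {subset [:: x; v; a; w; a2] <= A :|: B} -> W \subset A :|: B.
  by move=> sAB; apply/subsetP => y /sW /sAB.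
case: (boolP (e x v || e x a2)) => [hx|].
  apply: (bipartite_on_cover (A := [set a; w; x]) (B := [set v; a2])).
  - by apply: cover => y; rewrite !inE => /orP[|/or4P[]] /eqP->; rewrite !eqxx ?orbT.
  - apply: independent3 => //; case/orP: hx => hx.
    + by apply: (tf_nonadj (y := v)); rewrite // e_sym.
    + by apply: (tf_nonadj (y := a2)); rewrite // e_sym.
    + by apply: (tf_nonadj (y := v)); rewrite // e_sym.
    + by apply: (tf_nonadj (y := a2)); rewrite // e_sym.
  - exact: independent2.
rewrite negb_or => /andP[nxv nxa2].
apply: (bipartite_on_cover (A := [set a; w]) (B := [set v; a2; x])).
- by apply: cover => y; rewrite !inE => /orP[|/or4P[]] /eqP->; rewrite !eqxx ?orbT.
- exact: independent2.
- by apply: independent3; rewrite // e_sym.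
Qed.

Lemma nonbip5_min_deg2 W u : ~ bipartite_on W -> #|W| = 5 -> u \in W -> 1 < #|nbhd W u|.
Proof.
move=> nbW W5 uW; rewrite ltnNge; apply/negP => du.
have W'4 : #|W :\ u| = 4 by move: W5; rewrite (cardsD1 u W) uW => -[].
by move: (nonbip_card_ge5 (nonbip_del_low uW du nbW)); rewrite W'4.
Qed.

Lemma nonbip5_cycle W : ~ bipartite_on W -> #|W| = 5 -> exists g, cycle5 g /\ W =i codom g.
Proof.
move=> nbW W5; have deg := nonbip5_min_deg2 nbW W5.
have [v vW] := nonbip_nonempty nbW.
have /card_gt1P[a [b [aN bN ab]]] := deg v vW.
move: aN bN; rewrite !in_nbhd => /andP[aW eva] /andP[bW evb].
have [a2] := card_gt1_other v (deg a aW); rewrite in_nbhd => /andP[a2W eaa2] a2v.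
have nab : ~~ e a b by apply: (tf_nonadj (y := v)); rewrite // e_sym.
have nva2 : ~~ e v a2 := tf_nonadj eva eaa2.
have a2b : a2 != b := nonadj_neq eaa2 nab.
have [x xW] : exists2 x, x \in W & x \notin [set y in [:: v; a; b; a2]].
  by apply: card_gt_notin; rewrite cardsE W5 (leq_ltn_trans (card_size _)).
rewrite inE => xn.
have sW : {subset W <= [:: x; v; a; b; a2]}.
  apply: mem_of_card_le; rewrite ?W5 //; last first.
    by move=> y; rewrite !inE => /orP[|/or4P[]] /eqP->.
  rewrite [uniq _]/= xn; move: xn; rewrite !inE !negb_or => /and4P[xv xa xb xa2].
  rewrite (edge_neq eva) (edge_neq evb) ab (eq_sym v) a2v (edge_neq eaa2).
  by rewrite (eq_sym b) a2b.
have nba2 : ~~ e b a2.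
  by apply/negP => eba2; apply: nbW; apply: four_cycle_plus_one_bipartite sW eva evb eaa2 eba2.
have [b2] := card_gt1_other v (deg b bW); rewrite in_nbhd => /andP[b2W ebb2] b2v.
have ebx : e b x.
  suff <- : b2 = x by [].
  apply: eq_of_mem_cons_notin (sW _ b2W) _; rewrite !inE !negb_or b2v.
  rewrite (nonadj_neq ebb2 (_ : ~~ e b a)) 1?e_sym //.
  by rewrite eq_sym (edge_neq ebb2) (nonadj_neq ebb2 nba2).
have [z] := card_gt1_other a (deg a2 a2W); rewrite in_nbhd => /andP[zW ea2z] za.
have ea2x : e a2 x.
  suff <- : z = x by [].
  apply: eq_of_mem_cons_notin (sW _ zW) _; rewrite !inE !negb_or za.
  rewrite (nonadj_neq ea2z (_ : ~~ e a2 v)) 1?e_sym //.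
  rewrite (nonadj_neq ea2z (_ : ~~ e a2 b)) 1?e_sym //.
  by rewrite eq_sym (edge_neq ea2z).
exists (fun i => nth v [:: v; a; a2; x; b] i); split.
  apply: cycle5_of_path => //; first by rewrite e_sym.
  - exact: tf_nonadj evb ebx.
  - exact: tf_nonadj eaa2 ea2x.
  - by rewrite e_sym.
move=> y; rewrite codom_nth5 //; apply/idP/idP => [/sW|].
  by rewrite !inE => /orP[|/or4P[]] /eqP->; rewrite !eqxx ?orbT.
by rewrite !inE => /orP[|/or4P[]] /eqP->.
Qed.

Definition C5_colouring_along g x : 'I_3 :=
  if [pick i | g i == x] is Some i then C5_colour i else col2.

Lemma C5_colouring_along_f g i : injective g -> C5_colouring_along g (g i) = C5_colour i.
Proof.
move=> ginj; rewrite /C5_colouring_along.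
by case: pickP => [j /eqP/ginj->|/(_ i)] //; rewrite eqxx.
Qed.

Lemma C5_colouring_along_out g x : x \notin codom g -> C5_colouring_along g x = col2.
Proof.
move=> xg; rewrite /C5_colouring_along; case: pickP => // j /eqP gj.
by move: xg; rewrite -gj codom_f.
Qed.

Lemma C5_plus_vertex_normal W g p : cycle5 g -> W =i [predU1 p & codom g] ->
  p \notin codom g -> e p (g ord0) -> ~~ e p (g (C5v 3)) -> has_forced_triple W.
Proof.
move=> cg defW pg ep0 np3; have ginj := cycle5_inj cg.
set c := C5_colouring_along g.
have cp : c p = col2 := C5_colouring_along_out pg.
have cgi i : c (g i) = C5_colour i := C5_colouring_along_f i ginj.
have gW i : g i \in W by rewrite defW inE codom_f orbT.
have pW : p \in W by rewrite defW inE eqxx.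
have pg' i : (p == g i) = false by apply: contraNF pg => /eqP->; apply: codom_f.
have p_ok i : e p (g i) -> c p != c (g i).
  by rewrite cp cgi eq_sym C5_colour_eq_col2; apply: contraTneq => ->.
have pc : proper_on W c.
  move=> x y; rewrite !defW !inE => /predU1P[->|/codomP[i ->]] /predU1P[->|/codomP[j ->]].
  - by rewrite e_irr.
  - exact: p_ok.
  - by rewrite e_sym eq_sym; apply: p_ok.
  - by rewrite !cgi cg; apply: C5_colour_proper.
exists c; apply: (forced_triple_chain (f1 := g ord0) (f2 := g (C5v 2)) (f3 := g (C5v 4))).
all: rewrite ?(inj_eq ginj) //.
- by exists (g (C5v 1)), p; rewrite !cgi cp cg e_sym ep0 !inE !(inj_eq ginj) !pg'.
- by exists (g (C5v 1)), (g (C5v 3)); rewrite !cgi !cg !inE !(inj_eq ginj).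
- by exists (g ord0), (g (C5v 3)); rewrite !cgi !cg !inE !(inj_eq ginj).
Qed.

Lemma C5_plus_vertex W g p : cycle5 g -> W =i [predU1 p & codom g] ->
  p \notin codom g -> (exists k, e p (g k)) -> has_forced_triple W.
Proof.
move=> cg defW pg [k epk].
have cg1 : cycle5 (g \o rot5 k) := cycle5_rot k cg.
have defW1 : W =i [predU1 p & codom (g \o rot5 k)] by move=> x; rewrite defW !inE codom_rot5.
have pg1 : p \notin codom (g \o rot5 k) by rewrite codom_rot5.
have ep0 : e p ((g \o rot5 k) ord0) by rewrite /= rot5_ord0.
case: (boolP (e p ((g \o rot5 k) (C5v 3)))) => ep3.
  apply: (C5_plus_vertex_normal (cycle5_rot (C5v 3) cg1)).
  - by move=> x; rewrite defW1 !inE (@codom_rot5 (g \o rot5 k)).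
  - by rewrite (@codom_rot5 (g \o rot5 k)).
  - by rewrite /= rot5_ord0.
  - rewrite /=; have -> : rot5 (C5v 3) (C5v 3) = C5v 1 by apply: val_inj.
    by apply: tf_nonadj ep0 _; rewrite cg1.
exact: C5_plus_vertex_normal cg1 defW1 pg1 ep0 ep3.
Qed.

Lemma nonbip5_plus_vertex W v q : v \in W -> ~ bipartite_on (W :\ v) -> #|W :\ v| = 5 ->
  q \in W :\ v -> e v q -> has_forced_triple W.
Proof.
move=> vW nb5 W5 qW evq; have [g [cg defW']] := nonbip5_cycle nb5 W5.
apply: (C5_plus_vertex (p := v) cg).
- by move=> x; rewrite !inE -defW' !inE; case: (eqVneq x v) => [->|] /=.
- by rewrite -defW' !inE eqxx.
- by move: qW; rewrite defW' => /codomP[k qk]; exists k; rewrite -qk.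
Qed.

(** * Minimum degree three *)

Definition col2_saturated W c := forall w k, w \in W -> c w = col2 -> k != col2 ->
  exists2 u, u \in nbhd W w & c u = k.

Lemma exists_col2_saturated W d : proper_on W d ->
  exists2 c, proper_on W c & col2_saturated W c.
Proof.
pose n2 c := #|[set x in W | c x == col2]|.
suff H n c : n2 c = n -> proper_on W c -> exists2 c', proper_on W c' & col2_saturated W c'.
  by move=> pd; apply: H erefl pd.
elim/ltn_ind: n c => n IH c cn pc.
case: (classic (exists w k, [/\ w \in W, c w = col2, k != col2 &
                                forall u, u \in nbhd W w -> c u != k])); last first.
  move=> sat; exists c => // w k wW cw k2; apply: NNPP => nou; apply: sat.
  by exists w, k; split => // u uN; apply/eqP => cu; apply: nou; exists u.
case=> w [k [wW cw k2 nok]].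
(* Recolouring w with k is proper and shrinks the class of colour 2. *)
pose c' x := if x == w then k else c x.
have pc' : proper_on W c'.
  move=> x y xW yW exy; rewrite /c'.
  have nok' z : z \in W -> e w z -> k != c z.
    by move=> zW ewz; rewrite eq_sym; apply: nok; rewrite in_nbhd zW.
  case: (eqVneq x w) => [exw|xw]; case: (eqVneq y w) => [eyw|yw] //=.
  - by move: exy; rewrite exw eyw e_irr.
  - by apply: nok'; rewrite // -exw.
  - by rewrite eq_sym; apply: nok'; rewrite // -eyw e_sym.
  - exact: pc.
apply: (IH (n2 c') _ c' erefl pc').
rewrite -cn /n2 (cardsD1 w [set x in W | c x == col2]) inE wW cw eqxx add1n ltnS.
apply: subset_leq_card; apply/subsetP => x; rewrite !inE /c'.
by case: (eqVneq x w) => [->|_] //=; rewrite (negbTE k2) andbF.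
Qed.

Lemma forced_triple_big_col2 W c : proper_on W c -> col2_saturated W c ->
  2 < #|[set x in W | c x == col2]| -> forced_triple W c.
Proof.
move=> pc sat /card_gt2P[f1 [f2 [f3 [[f1C f2C f3C] [n12 n23 n31]]]]].
have inC f : f \in [set x in W | c x == col2] -> f \in W /\ c f = col2.
  by rewrite inE => /andP[-> /eqP].
have [[f1W _] [f2W _] [f3W _]] := And3 (inC _ f1C) (inC _ f2C) (inC _ f3C).
apply: (forced_triple_outside (f1 := f1) (f2 := f2) (f3 := f3) pc) => //; first by rewrite eq_sym.
move=> f fU; have [fW cf] : f \in W /\ c f = col2.
  by move: fU; rewrite !inE -orbA => /or3P[]/eqP->; apply: inC.
have out u : c u != col2 -> u \notin [set f1; f2; f3].
  apply: contra; rewrite !inE -orbA => /or3P[]/eqP->; apply/eqP.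
  - by case: (inC _ f1C).
  - by case: (inC _ f2C).
  - by case: (inC _ f3C).
have [u0] := sat f col0 fW cf isT; rewrite in_nbhd => /andP[u0W efu0] cu0.
have [u1] := sat f col1 fW cf isT; rewrite in_nbhd => /andP[u1W efu1] cu1.
by exists u0, u1; rewrite cu0 cu1 cf; split => //; split => //; apply: out; rewrite ?cu0 ?cu1.
Qed.

Lemma forced_triple_small_col2 W c w : proper_on W c ->
  (forall v, v \in W -> 2 < #|nbhd W v|) -> #|[set x in W | c x == col2]| <= 2 ->
  w \in W -> c w = col2 -> forced_triple W c.
Proof.
move=> pc deg small wW cw.
have /card_gt2P[u1 [u2 [u3 [[u1N u2N u3N] [n12 n23 n31]]]]] := deg w wW.
have UN u : u \in [set u1; u2; u3] -> u \in W /\ e w u.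
  by rewrite !inE -orbA => /or3P[]/eqP->; apply/andP; rewrite -in_nbhd.
have uW u : u \in nbhd W w -> u \in W by rewrite in_nbhd => /andP[].
have [u1W u2W u3W] := And3 (uW _ u1N) (uW _ u2N) (uW _ u3N).
apply: (forced_triple_outside (f1 := u1) (f2 := u2) (f3 := u3) pc) => //.
  by rewrite eq_sym.
move=> u /UN[uW' ewu].
have [x xN xC] : exists2 x, x \in nbhd W u & x \notin [set x in W | c x == col2].
  by apply: card_gt_notin; apply: leq_ltn_trans small (deg u uW').
move: xN; rewrite in_nbhd => /andP[xW eux].
have wU : w \notin [set u1; u2; u3] by apply/negP => /UN[_]; rewrite e_irr.
have xU : x \notin [set u1; u2; u3].
  apply/negP => /UN[_ ewx]; move: eux; apply/negP.
  by apply: (tf_nonadj (y := w)); rewrite // e_sym.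
exists w, x; split => //; first by rewrite e_sym.
split => //.
- by rewrite cw eq_sym; move: xC; rewrite inE xW.
- by rewrite eq_sym; apply: pc; rewrite // e_sym.
- by rewrite eq_sym; apply: pc.
Qed.

Lemma forced_triple_min_deg3 W d : proper_on W d -> ~ bipartite_on W ->
  (forall v, v \in W -> 2 < #|nbhd W v|) -> has_forced_triple W.
Proof.
move=> pd nbW deg; have [c pc sat] := exists_col2_saturated pd; exists c.
have [w] : exists w, w \in [set x in W | c x == col2].
  apply/set0Pn/negP => /eqP C0; apply: nbW; exists (fun x => c x == col1).
  have not2 z : z \in W -> c z != col2.
    by move=> zW; apply/negP => cz; have := in_set0 z; rewrite -C0 inE zW cz.
  by move=> x y xW yW exy; apply: col1_flip; [apply: not2 | apply: not2 | apply: pc].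
rewrite inE => /andP[wW /eqP cw].
case: (leqP #|[set x in W | c x == col2]| 2) => [small|big].
  exact: forced_triple_small_col2 deg small wW cw.
exact: forced_triple_big_col2.
Qed.

(** * A vertex of degree two whose deletion is bipartite *)

Definition deg2_config W p q r b :=
  [/\ p \in W, nbhd W p \subset [set q; r], q \in nbhd W p, r \in nbhd W p &
      [/\ bipartition (W :\ p) b, b q = false & b r = true]].

Lemma deg2_config_swap W p q r b :
  deg2_config W p q r b -> deg2_config W p r q (fun x => ~~ b x).
Proof.
case=> pW sN qN rN [hb bq br]; split => //; first by rewrite setUC.
split; rewrite ?bq ?br // => x y xW yW exy.
by move: (hb x y xW yW exy); case: (b x); case: (b y).
Qed.

Section DegreeTwoVertex.
Variables (W : {set T}) (p q r : T) (b : T -> bool).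
Hypothesis cfg : deg2_config W p q r b.
Hypothesis deg2 : forall u, u \in W -> 1 < #|nbhd W u|.

Let basics : [/\ q \in W, r \in W, e p q, e p r & [/\ q != p, r != p, q != r & ~~ e q r]].
Proof.
have [pW sN qN rN [hb bq br]] := cfg.
move: qN rN; rewrite !in_nbhd => /andP[qW epq] /andP[rW epr].
split => //; split.
- by rewrite eq_sym edge_neq.
- by rewrite eq_sym edge_neq.
- by apply/eqP => qr; move: bq; rewrite qr br.
- by apply: (tf_nonadj (y := p)); rewrite // e_sym.
Qed.

Let in_Wp z : z \in W -> z != p -> z \in W :\ p.
Proof. by move=> zW zp; rewrite in_setD1 zp zW. Qed.

Let flip z y : z \in W :\ p -> y \in W :\ p -> e z y -> b y = ~~ b z.
Proof.
have [_ _ _ _ [hb _ _]] := cfg.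
by move=> zWp yWp ezy; move: (hb z y zWp yWp ezy); case: (b y); case: (b z).
Qed.

Let off_p z y : z \in W -> z != q -> z != r -> e z y -> y != p.
Proof.
have [_ sN _ _ _] := cfg; move=> zW zq zr ezy; apply/eqP => yp.
have : z \in [set q; r] by apply: (subsetP sN); rewrite in_nbhd zW e_sym -yp.
by rewrite !inE (negbTE zq) (negbTE zr).
Qed.

Let neq_b z z' : b z != b z' -> z != z'.
Proof. by apply: contraNneq => ->. Qed.

Definition two_colour_at x1 z : 'I_3 :=
  if (z == p) || (z == x1) then col2 else if b z then col1 else col0.

Lemma two_colour_hub x1 z : (z == p) || (z == x1) -> two_colour_at x1 z = col2.
Proof. by rewrite /two_colour_at => ->. Qed.

Lemma two_colour_side x1 z : z != p -> z != x1 ->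
  two_colour_at x1 z = if b z then col1 else col0.
Proof. by move=> zp zx1; rewrite /two_colour_at (negbTE zp) (negbTE zx1). Qed.

Lemma two_colour_proper x1 : x1 \in W :\ p -> x1 != q -> x1 != r -> b x1 = false ->
  proper_on W (two_colour_at x1).
Proof.
have [pW sN _ _ [hb bq br]] := cfg; have [_ _ _ _ [qp rp _ _]] := basics.
move=> x1Wp x1q x1r bx1; move: (x1Wp); rewrite in_setD1 => /andP[x1p x1W].
have hub z y : z \in W -> y \in W -> e z y -> (z == p) || (z == x1) ->
    two_colour_at x1 y != col2.
  move=> zW yW ezy /orP[/eqP zp|/eqP zx1].
    have : y \in [set q; r] by apply: (subsetP sN); rewrite in_nbhd yW -zp.
    rewrite !inE => /orP[]/eqP->.
    - by rewrite (two_colour_side qp) ?bq // eq_sym.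
    - by rewrite (two_colour_side rp) ?br // eq_sym.
  rewrite zx1 in ezy; have yp := off_p x1W x1q x1r ezy.
  have by1 : b y = true by rewrite (flip x1Wp (in_Wp yW yp) ezy) bx1.
  by rewrite (two_colour_side yp) ?by1 // eq_sym edge_neq.
move=> x y xW yW exy.
case hx: ((x == p) || (x == x1)).
  by rewrite eq_sym (two_colour_hub hx); apply: hub hx.
case hy: ((y == p) || (y == x1)).
  by rewrite (two_colour_hub hy); apply: hub hy; rewrite // e_sym.
move/negbT: hx; rewrite negb_or => /andP[xp xx1].
move/negbT: hy; rewrite negb_or => /andP[yp yx1].
rewrite !two_colour_side //; move: (hb x y (in_Wp xW xp) (in_Wp yW yp) exy).
by case: (b x); case: (b y).
Qed.

Lemma two_colour_rainbow x1 (K : pred T) u h z :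
  u \in W :\ p -> z \in W :\ p -> h \in W -> (h == p) || (h == x1) ->
  u != x1 -> z != x1 -> e u h -> e u z -> K h -> K z ->
  rainbow_at W (two_colour_at x1) K u.
Proof.
move=> uWp zWp hW hub ux1 zx1 euh euz Kh Kz.
have [up uW] : u != p /\ u \in W by apply/andP; rewrite -in_setD1.
have [zp zW] : z != p /\ z \in W by apply/andP; rewrite -in_setD1.
apply: (rainbow_atI (x := h) (y := z)) => //.
all: rewrite ?(two_colour_hub hub) ?two_colour_side // ?(flip uWp zWp euz).
all: by case: (b u).
Qed.

Lemma forced_triple_far t : t \in W :\ p -> b t = true -> t != r -> ~~ e q t ->
  has_forced_triple W.
Proof.
have [pW _ _ _ [_ bq br]] := cfg; have [qW rW epq epr [qp rp qr nqr]] := basics.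
have [qWp rWp] := (in_Wp qW qp, in_Wp rW rp).
move=> tWp bt tr nqt; move: (tWp); rewrite in_setD1 => /andP[tp tW].
have tq : t != q by apply: neq_b; rewrite bt bq.
have nbt x : x \in nbhd W t -> [/\ x \in W :\ p, e t x, b x = false, x != q & x != r].
  rewrite in_nbhd => /andP[xW etx]; have xWp := in_Wp xW (off_p tW tq tr etx).
  have bx : b x = false by rewrite (flip tWp xWp etx) bt.
  split => //; last by apply: neq_b; rewrite bx br.
  by apply: contraNneq nqt => <-; rewrite e_sym.
have [xr] := card_gt1_other p (deg2 rW); rewrite in_nbhd => /andP[xrW erxr] xrp.
have [yq] := card_gt1_other p (deg2 qW); rewrite in_nbhd => /andP[yqW eqyq] yqp.
have [x1 /nbt[x1Wp etx1 bx1 x1q x1r] x1xr] := card_gt1_other xr (deg2 tW).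
have [x2 /nbt[x2Wp etx2 bx2 x2q x2r] x21] := card_gt1_other x1 (deg2 tW).
have [xrWp yqWp] := (in_Wp xrW xrp, in_Wp yqW yqp).
have bxr : b xr = false by rewrite (flip rWp xrWp erxr) br.
have byq : b yq = true by rewrite (flip qWp yqWp eqyq) bq.
have x1W : x1 \in W by move: x1Wp; rewrite in_setD1 => /andP[].
have hub_p : (p == p) || (p == x1) by rewrite eqxx.
have hub_x1 : (x1 == p) || (x1 == x1) by rewrite eqxx orbT.
have [qx1 rx1 xrx1] : [/\ q != x1, r != x1 & xr != x1] by rewrite !(eq_sym _ x1).
have yqx1 : yq != x1 by apply: neq_b; rewrite byq bx1.
have pU : p \notin [set q; r; t] by apply: notin_set3; rewrite // eq_sym.
exists (two_colour_at x1); apply: (forced_triple_outside (f1 := q) (f2 := r) (f3 := t)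
  (two_colour_proper x1Wp x1q x1r bx1)); rewrite // 1?eq_sym //.
move=> f; rewrite !inE -orbA => /or3P[]/eqP->.
- apply: (two_colour_rainbow qWp yqWp pW hub_p qx1 yqx1 _ eqyq pU); first by rewrite e_sym.
  apply: notin_set3; first by rewrite eq_sym edge_neq.
    exact: nonadj_neq eqyq nqr.
  exact: nonadj_neq eqyq nqt.
- apply: (two_colour_rainbow rWp xrWp pW hub_p rx1 xrx1 _ erxr pU); first by rewrite e_sym.
  apply: notin_set3; last by apply: neq_b; rewrite bxr bt.
    by apply: (nonadj_neq erxr); rewrite e_sym.
  by rewrite eq_sym edge_neq.
- apply: (two_colour_rainbow tWp x2Wp x1W hub_x1 (edge_neq etx1) x21 etx1 etx2).
    by apply: notin_set3 => //; rewrite eq_sym edge_neq.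
  by apply: notin_set3 => //; rewrite eq_sym edge_neq.
Qed.

Lemma forced_triple_near_both yq xr y' x' :
  yq \in nbhd W q -> yq != p -> xr \in nbhd W r -> xr != p ->
  y' \in W :\ p -> b y' = true -> y' != r -> y' != yq ->
  x' \in W :\ p -> b x' = false -> x' != q -> x' != xr ->
  (forall t, t \in W :\ p -> b t = true -> t != r -> e q t) ->
  (forall s, s \in W :\ p -> b s = false -> s != q -> e r s) -> has_forced_triple W.
Proof.
have [pW _ _ _ [_ bq br]] := cfg; have [qW rW epq epr [qp rp qr nqr]] := basics.
have [qWp rWp] := (in_Wp qW qp, in_Wp rW rp).
rewrite !in_nbhd => /andP[yqW eqyq] yqp /andP[xrW erxr] xrp.
move=> y'Wp by' y'r y'yq x'Wp bx' x'q x'xr hT hS.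
have xrWp := in_Wp xrW xrp.
have bxr : b xr = false by rewrite (flip rWp xrWp erxr) br.
have xrq : xr != q by apply: (nonadj_neq erxr); rewrite e_sym.
have xrr : xr != r by rewrite eq_sym edge_neq.
have [y] := card_gt1_other r (deg2 xrW); rewrite in_nbhd => /andP[yW exry] yr.
have yp := off_p xrW xrq xrr exry; have yWp := in_Wp yW yp.
have by1 : b y = true by rewrite (flip xrWp yWp exry) bxr.
have [y2 [y2Wp by2 y2r y2y]] :
    exists y2, [/\ y2 \in W :\ p, b y2 = true, y2 != r & y2 != y].
  case: (eqVneq yq y) => [<-|yqy]; [exists y' | exists yq]; split => //.
  - exact: in_Wp.
  - by rewrite (flip qWp (in_Wp yqW yqp) eqyq) bq.
  - exact: nonadj_neq eqyq nqr.
have [hub_p hub_xr] : ((p == p) || (p == xr)) /\ ((xr == p) || (xr == xr)).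
  by rewrite !eqxx orbT.
have [rxr qxr] : r != xr /\ q != xr by rewrite !(eq_sym _ xr).
have [rq ry qy] : [/\ r != q, r != y & q != y].
  by split; rewrite 1?eq_sym //; apply: neq_b; rewrite bq by1.
have pU : p \notin [set r; q; y] by apply: notin_set3; rewrite // eq_sym.
exists (two_colour_at xr); apply: (forced_triple_chain (f1 := r) (f2 := q) (f3 := y)
          (two_colour_proper xrWp xrq xrr bxr)) => //.
- apply: (two_colour_rainbow rWp x'Wp pW hub_p rxr x'xr _ (hS x' x'Wp bx' x'q) pU).
    by rewrite e_sym.
  by apply: notin_set3 => //; apply: neq_b; rewrite bx' ?br ?by1.
- apply: (two_colour_rainbow qWp y2Wp pW hub_p qxr _ _ (hT y2 y2Wp by2 y2r)).
  + by apply: neq_b; rewrite by2 bxr.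
  + by rewrite e_sym.
  + by rewrite pU.
  + by rewrite notin_set3 //; apply: neq_b; rewrite by2 bq.
- apply: (two_colour_rainbow yWp qWp xrW hub_xr _ qxr _ _ _ (introT orP (or_intror (eqxx q)))).
  + by rewrite eq_sym edge_neq.
  + by rewrite e_sym.
  + by rewrite e_sym hT.
  + by rewrite (notin_set3 xrr xrq (edge_neq exry)).
Qed.

Lemma near_one_sided_absurd yq xr y' :
  yq \in nbhd W q -> yq != p -> xr \in nbhd W r -> xr != p ->
  y' \in W :\ p -> b y' = true -> y' != r -> y' != yq ->
  (forall x', x' \in W :\ p -> b x' = false -> x' != q -> x' = xr) ->
  (forall u, u \in W -> #|nbhd W u| <= 2 -> bipartite_on (W :\ u)) -> False.
Proof.
have [pW _ _ _ [_ bq br]] := cfg; have [qW rW epq epr [qp rp qr nqr]] := basics.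
have qWp := in_Wp qW qp.
rewrite !in_nbhd => /andP[yqW eqyq] yqp /andP[xrW erxr] xrp y'Wp by' y'r y'yq onlyxr hbip.
have sub z : z \in W :\ p -> b z = true -> z != r -> nbhd W z \subset [set q; xr].
  move=> zWp bz zr; apply/subsetP => y; rewrite in_nbhd => /andP[yW ezy].
  have zq : z != q by apply/eqP => zq; move: bz; rewrite zq bq.
  have zW : z \in W by move: zWp; rewrite in_setD1 => /andP[].
  have yWp := in_Wp yW (off_p zW zq zr ezy).
  have by1 : b y = false by rewrite (flip zWp yWp ezy) bz.
  by rewrite !inE; case: (eqVneq y q) => //= ny; rewrite (onlyxr y yWp by1 ny) eqxx.
have yqWp := in_Wp yqW yqp.
have byq : b yq = true by rewrite (flip qWp yqWp eqyq) bq.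
have eyqxr : e yq xr.
  have [z zN zq] := card_gt1_other q (deg2 yqW).
  move: (subsetP (sub yq yqWp byq (nonadj_neq eqyq nqr)) z zN).
  by rewrite !inE (negbTE zq) => /eqP zxr; move: zN; rewrite zxr in_nbhd => /andP[].
move: (y'Wp); rewrite in_setD1 => /andP[y'p y'W].
have := hbip y' y'W (card_sub2 (sub y' y'Wp by' y'r)).
have inW z : z \in W -> z != y' -> z \in W :\ y' by move=> zW zy; rewrite in_setD1 zy zW.
apply: (odd5_nonbip (v0 := p) (v1 := q) (v2 := yq) (v3 := xr) (v4 := r)) => //.
- by apply: inW; rewrite // eq_sym.
- by apply: inW => //; apply/eqP => qy; move: by'; rewrite -qy bq.
- by apply: inW; rewrite // eq_sym.
- apply: inW => //; apply/eqP => xry; move: by'.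
  by rewrite -xry (flip (in_Wp rW rp) (in_Wp xrW xrp) erxr) br.
- by apply: inW; rewrite // eq_sym.
- by rewrite e_sym.
- by rewrite e_sym.
Qed.

End DegreeTwoVertex.

Lemma forced_triple_near W p q r b : deg2_config W p q r b ->
  (forall u, u \in W -> 1 < #|nbhd W u|) ->
  (forall u, u \in W -> #|nbhd W u| <= 2 -> bipartite_on (W :\ u)) -> 6 <= #|W| ->
  (forall t, t \in W :\ p -> b t = true -> t != r -> e q t) ->
  (forall s, s \in W :\ p -> b s = false -> s != q -> e r s) -> has_forced_triple W.
Proof.
move=> cfg deg2 hbip big hT hS; have [pW _ qN rN [_ bq br]] := cfg.
move: (qN) (rN); rewrite !in_nbhd => /andP[qW _] /andP[rW _].
have [yq yqN yqp] := card_gt1_other p (deg2 q qW).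
have [xr xrN xrp] := card_gt1_other p (deg2 r rW).
case: (classic (exists y', [/\ y' \in W :\ p, b y' = true, y' != r & y' != yq]))
  => [[y' [y'Wp by' y'r y'yq]]|nA];
case: (classic (exists x', [/\ x' \in W :\ p, b x' = false, x' != q & x' != xr]))
  => [[x' [x'Wp bx' x'q x'xr]]|nB].
- exact: (forced_triple_near_both cfg deg2 yqN yqp xrN xrp y'Wp by' y'r y'yq x'Wp bx' x'q x'xr).
- case: (near_one_sided_absurd cfg deg2 yqN yqp xrN xrp y'Wp by' y'r y'yq _ hbip).
  move=> x' x'Wp bx' x'q; apply: NNPP => x'xr; apply: nB; exists x'; split => //.
  exact/eqP.
- case: (near_one_sided_absurd (deg2_config_swap cfg) deg2 xrN xrp yqN yqp x'Wp _ x'q x'xr _ hbip).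
  + by rewrite bx'.
  + move=> y' y'Wp /negbFE by' y'r; apply: NNPP => y'yq; apply: nA; exists y'.
    by split => //; exact/eqP.
exfalso; move: big; rewrite ltnNge; apply/negP/negPn.
apply: leq_trans (card_size [:: p; q; r; yq; xr]); apply: subset_leq_card.
apply/subsetP => z zW; case: (eqVneq z p) => [->|zp]; first by rewrite inE eqxx.
have zWp : z \in W :\ p by rewrite in_setD1 zp zW.
rewrite !inE; case bz: (b z).
- case: (eqVneq z r) => [->|zr]; first by rewrite ?eqxx !orbT.
  case: (eqVneq z yq) => [->|zyq]; first by rewrite ?eqxx !orbT.
  by case: nA; exists z.
- case: (eqVneq z q) => [->|zq]; first by rewrite ?eqxx !orbT.
  case: (eqVneq z xr) => [->|zxr]; first by rewrite ?eqxx !orbT.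
  by case: nB; exists z.
Qed.

Lemma forced_triple_deg2 W p q r b : deg2_config W p q r b ->
  (forall u, u \in W -> 1 < #|nbhd W u|) ->
  (forall u, u \in W -> #|nbhd W u| <= 2 -> bipartite_on (W :\ u)) -> 6 <= #|W| ->
  has_forced_triple W.
Proof.
move=> cfg deg2 hbip big.
case: (classic (exists t, [/\ t \in W :\ p, b t = true, t != r & ~~ e q t]))
  => [[t [tWp bt tr nqt]]|nT].
  exact: (@forced_triple_far _ _ _ _ _ cfg deg2 t tWp bt tr nqt).
case: (classic (exists s, [/\ s \in W :\ p, b s = false, s != q & ~~ e r s]))
  => [[s [sWp bs sq nrs]]|nS].
  by apply: (@forced_triple_far _ _ _ _ _ (deg2_config_swap cfg) deg2 s sWp) => //; rewrite bs.
apply: (forced_triple_near cfg deg2 hbip big) => [t tWp bt tr|s sWp bs sq].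
- by apply/negPn/negP => nqt; apply: nT; exists t.
- by apply/negPn/negP => nrs; apply: nS; exists s.
Qed.

Lemma exists_deg2_config W p : ~ bipartite_on W -> p \in W ->
  1 < #|nbhd W p| -> #|nbhd W p| <= 2 -> bipartite_on (W :\ p) ->
  exists q r b, deg2_config W p q r b.
Proof.
move=> nbW pW d1 d2 [b hb]; have [q qN _] := card_gt1_other p d1.
have [r rN sN] := card_le2_pair d2 qN.
have bqr : b q != b r.
  by apply/negP => /eqP bqr; apply: nbW; apply: bipartite_on_extend pW sN hb bqr.
exists q, r; case bq: (b q); [exists (fun x => ~~ b x) | exists b]; split => //.
- split; rewrite ?bq //; first by move=> x y xW yW /(hb x y xW yW); case: (b x); case: (b y).
  by move: bqr; rewrite bq; case: (b r).
- by split => //; move: bqr; rewrite bq; case: (b r).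
Qed.

(** * Reduction at a vertex of degree at most two *)

Definition edge_in W : rel T := fun x y => [&& x \in W, y \in W & e x y].

Definition connected_on W := forall x y, x \in W -> y \in W -> connect (edge_in W) x y.

Definition component W q := [set x in W | connect (edge_in W) q x].

Lemma edge_in_sym W : symmetric (edge_in W).
Proof. by move=> x y; rewrite /edge_in e_sym andbCA. Qed.

Lemma connect_edge_in_sym W x y : connect (edge_in W) x y = connect (edge_in W) y x.
Proof. exact: (sym_connect_sym (@edge_in_sym W)). Qed.

Lemma connect_edge_in_sub W1 W2 x y : W1 \subset W2 ->
  connect (edge_in W1) x y -> connect (edge_in W2) x y.
Proof.
move=> sW; apply: connect_sub => u w /and3P[uW wW euw]; apply: connect1.
by rewrite /edge_in euw !(subsetP sW).
Qed.

Lemma edge_in_closed W A a y : a \in A ->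
  (forall x z, edge_in W x z -> x \in A -> z \in A) -> connect (edge_in W) a y -> y \in A.
Proof.
move=> aA clA cay; have cl := intro_closed (sym_connect_sym (@edge_in_sym W)) clA.
by rewrite -(closed_connect cl cay).
Qed.

Lemma connected_on_pivot W v :
  (forall x, x \in W -> connect (edge_in W) v x) -> connected_on W.
Proof.
by move=> cv x y xW yW; apply: connect_trans (cv y yW); rewrite connect_edge_in_sym cv.
Qed.

Lemma component_sub W q : component W q \subset W.
Proof. by apply/subsetP => x; rewrite inE => /andP[]. Qed.

Lemma mem_component_self W q : q \in W -> q \in component W q.
Proof. by move=> qW; rewrite inE qW connect0. Qed.

Lemma component_closed W q x y :
  x \in component W q -> y \in W -> e x y -> y \in component W q.
Proof.
rewrite !inE => /andP[xW cqx] yW exy; rewrite yW (connect_trans cqx) //.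
by apply: connect1; rewrite /edge_in xW yW exy.
Qed.

Lemma component_connected W q : q \in W -> connected_on (component W q).
Proof.
move=> qW; apply: connected_on_pivot (q) _ => x xK.
set K := component W q; set A := [set z in K | connect (edge_in K) q z].
suff /setIdP[] : x \in A by [].
apply: (edge_in_closed (W := W) (a := q)).
- by apply/setIdP; split; rewrite ?mem_component_self ?connect0.
- move=> y z /and3P[_ zW eyz] /setIdP[yK cqy].
  have zK : z \in K := component_closed yK zW eyz.
  by apply/setIdP; split; rewrite // (connect_trans cqy) // connect1 // /edge_in yK zK eyz.
- by move: xK; rewrite inE => /andP[].
Qed.

Lemma component_sym W q r : q \in W -> r \in W ->
  (r \in component W q) = (q \in component W r).
Proof. by move=> qW rW; rewrite !inE qW rW connect_edge_in_sym. Qed.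

Lemma component_trans W q r x :
  r \in component W q -> x \in component W r -> x \in component W q.
Proof. by rewrite !inE => /andP[_ cqr] /andP[-> crx]; apply: connect_trans crx. Qed.

Lemma component_cover W v q r : connected_on W -> v \in W -> nbhd W v \subset [set q; r] ->
  W :\ v \subset component (W :\ v) q :|: component (W :\ v) r.
Proof.
move=> cW vW sN; apply/subsetP => z; rewrite in_setD1 => /andP[zv zW].
suff : z \in v |: (component (W :\ v) q :|: component (W :\ v) r).
  by rewrite in_setU1 (negbTE zv).
apply: (edge_in_closed (W := W) (a := v)) (cW v z vW zW); first exact: setU11.
move=> x y /and3P[_ yW exy]; case: (eqVneq y v) => [-> _|yv]; first exact: setU11.
have yWv : y \in W :\ v by rewrite in_setD1 yv yW.
rewrite !in_setU1 (negbTE yv) /= !in_setU => /orP[/eqP xv|/orP[xK|xK]].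
- have : y \in [set q; r] by apply: (subsetP sN); rewrite in_nbhd yW -xv.
  by case/set2P => yqr; rewrite -yqr mem_component_self ?orbT.
- by rewrite (component_closed xK yWv exy).
- by rewrite (component_closed xK yWv exy) orbT.
Qed.

Lemma bipartite_on_two_components W q r : W \subset component W q :|: component W r ->
  bipartite_on (component W q) -> bipartite_on (component W r) -> bipartite_on W.
Proof.
move=> sW [b1 hb1] [b2 hb2].
exists (fun x => if x \in component W q then b1 x else b2 x) => x y xW yW exy.
case: (boolP (x \in component W q)) => xK.
  have yK := component_closed xK yW exy.
  by rewrite yK; apply: hb1.
have yK : y \notin component W q.
  by apply: contra xK => yK; apply: component_closed yK xW _; rewrite e_sym.
have inr z : z \in W -> z \notin component W q -> z \in component W r.
  by move=> zW; move: (subsetP sW z zW); rewrite in_setU => /orP[->|].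
by rewrite (negbTE yK); apply: hb2 => //; apply: inr.
Qed.

Lemma connected_on_add_component W v q : q \in W -> e v q ->
  connected_on (v |: component W q).
Proof.
move=> qW evq; apply: connected_on_pivot (v) _ => x.
rewrite in_setU1 => /orP[/eqP->|xK]; first exact: connect0.
apply: (connect_trans (y := q)).
  by apply: connect1; rewrite /edge_in setU11 in_setU1 mem_component_self ?orbT.
apply: connect_edge_in_sub (subsetUr _ _) _.
exact: component_connected (mem_component_self qW) xK.
Qed.

Lemma forced_triple_add_low W v q r : v \in W -> nbhd W v \subset [set q; r] ->
  has_forced_triple (W :\ v) -> has_forced_triple W.
Proof.
move=> vW sN [c' fc']; have [pc' _] := fc'.
have [k [kq kr]] := ord3_avoid2 (c' q) (c' r).
pose c x := if x == v then k else c' x.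
have cv y : y \in W -> e v y -> c y != c v.
  move=> yW evy; have yv : y != v by rewrite eq_sym edge_neq.
  have : y \in [set q; r] by apply: (subsetP sN); rewrite in_nbhd yW.
  by rewrite /c eqxx (negbTE yv) !inE => /orP[]/eqP->; rewrite eq_sym.
exists c; apply: (forced_triple_sub (W' := W :\ v)); first exact: subD1set.
- move=> x y xW yW exy.
  case: (eqVneq x v) => [xv|xv]; first by rewrite xv eq_sym cv // -xv.
  case: (eqVneq y v) => [yv|yv]; first by rewrite yv cv // -yv e_sym.
  by rewrite /c (negbTE xv) (negbTE yv); apply: pc'; rewrite // in_setD1 ?xv ?yv.
- apply: (forced_triple_eq_on (c' := c')) => // x; rewrite in_setD1 => /andP[xv _].
  by rewrite /c (negbTE xv).
Qed.

Lemma forced_triple_add_component d W v q r : (forall x y, e x y -> d x != d y) ->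
  v \in W -> nbhd W v \subset [set q; r] -> q \in nbhd W v ->
  r \notin component (W :\ v) q -> has_forced_triple (v |: component (W :\ v) q) ->
  has_forced_triple W.
Proof.
move=> pd vW sN qN rK [c' fc']; have [pc' _] := fc'.
set K := component (W :\ v) q in rK fc' pc' *; set W' := v |: K in fc' pc' *.
have [k [kv _]] := ord3_avoid2 (c' v) (c' v).
pose s := tperm (d r) k.
pose c x := if x \in W' then c' x else s (d x).
have qK : q \in K.
  move: qN; rewrite in_nbhd => /andP[qW evq].
  by apply: mem_component_self; rewrite in_setD1 qW andbT eq_sym edge_neq.
have sW' : W' \subset W.
  apply/subsetP => x; rewrite in_setU1 => /orP[/eqP->//|/(subsetP (component_sub _ _))].
  by rewrite in_setD1 => /andP[].
have cross x y : x \in W -> y \in W -> e x y -> x \in W' -> y \notin W' -> c x != c y.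
  move=> xW yW exy xW' yW'; move: (yW'); rewrite in_setU1 negb_or => /andP[yv yK].
  have xv : x = v.
    apply/eqP; move: xW'; rewrite in_setU1 => /orP[//|xK].
    by move: yK; rewrite (component_closed xK _ exy) // in_setD1 yv yW.
  subst x; have : y \in [set q; r] by apply: (subsetP sN); rewrite in_nbhd yW.
  rewrite !inE => /orP[]/eqP yqr; first by move: yK; rewrite yqr qK.
  by rewrite /c (negbTE yW') xW' yqr /s tpermL eq_sym.
exists c; apply: (forced_triple_sub sW').
- move=> x y xW yW exy.
  case: (boolP (x \in W')) => xW'; case: (boolP (y \in W')) => yW'.
  + by rewrite /c xW' yW'; apply: pc'.
  + exact: cross.
  + by rewrite eq_sym; apply: cross; rewrite // e_sym.
  + rewrite /c (negbTE xW') (negbTE yW'); apply/eqP => /perm_inj /eqP.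
    by apply/negP; apply: pd.
- by apply: (forced_triple_eq_on (c' := c')) => // x xW'; rewrite /c xW'.
Qed.

Definition forced_triple_below W := forall W', #|W'| < #|W| ->
  connected_on W' -> ~ bipartite_on W' -> 6 <= #|W'| -> has_forced_triple W'.

Lemma forced_triple_del_connected W v q r : forced_triple_below W ->
  v \in W -> nbhd W v \subset [set q; r] -> q \in nbhd W v ->
  connected_on (W :\ v) -> ~ bipartite_on (W :\ v) -> has_forced_triple W.
Proof.
move=> IH vW sN qN cWv nbv; move: (qN); rewrite in_nbhd => /andP[qW evq].
have qWv : q \in W :\ v by rewrite in_setD1 qW andbT eq_sym edge_neq.
have Wv : #|W| = #|W :\ v|.+1 by rewrite (cardsD1 v W) vW.
case: (ltngtP #|W :\ v| 5) => [lt5|gt5|eq5].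
- by move: (nonbip_card_ge5 nbv); rewrite leqNgt lt5.
- by apply: (forced_triple_add_low vW sN); apply: IH; rewrite ?Wv.
- exact: nonbip5_plus_vertex vW nbv eq5 qWv evq.
Qed.

Lemma forced_triple_del_split d W v q r : (forall x y, e x y -> d x != d y) ->
  forced_triple_below W -> v \in W -> nbhd W v \subset [set q; r] -> q \in nbhd W v ->
  r \in W :\ v -> r \notin component (W :\ v) q ->
  ~ bipartite_on (component (W :\ v) q) -> has_forced_triple W.
Proof.
move=> pd IH vW sN qN rWv rK nbK; apply: (forced_triple_add_component pd vW sN qN rK).
move: (qN) (rWv); rewrite in_nbhd in_setD1 => /andP[qW evq] /andP[rv rW].
have qWv : q \in W :\ v by rewrite in_setD1 qW andbT eq_sym edge_neq.
have sKW : component (W :\ v) q \subset W.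
  by apply: subset_trans (component_sub _ _) (subD1set _ _).
have vK : v \notin component (W :\ v) q.
  by apply/negP => /(subsetP (component_sub _ _)); rewrite in_setD1 eqxx.
apply: IH.
- apply: proper_card; apply/properP; split.
    by apply/subsetP => x; rewrite in_setU1 => /orP[/eqP->//|/(subsetP sKW)].
  by exists r; rewrite // in_setU1 negb_or rK andbT.
- exact: connected_on_add_component qWv evq.
- by apply: contra_not nbK; apply: bipartite_on_sub; apply: subsetUr.
- by rewrite cardsU1 vK add1n ltnS; apply: nonbip_card_ge5.
Qed.

Lemma connected_nbhd_nonempty W v : connected_on W -> v \in W -> 1 < #|W| ->
  exists q, q \in nbhd W v.
Proof.
move=> cW vW W2; case: (set_0Vmem (nbhd W v)) => [N0|[q qN]]; last by exists q.
have [z zW zv] := card_gt1_other v W2.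
have : z \in [set v].
  apply: (edge_in_closed (W := W) (a := v)) (cW v z vW zW); first exact: set11.
  move=> x y /and3P[_ yW exy]; rewrite inE => /eqP xv.
  by have := in_set0 y; rewrite -N0 in_nbhd yW -xv exy.
by rewrite inE (negbTE zv).
Qed.

Lemma forced_triple_low_vertex d W v : (forall x y, e x y -> d x != d y) ->
  forced_triple_below W -> connected_on W -> v \in W -> 6 <= #|W| ->
  #|nbhd W v| <= 2 -> ~ bipartite_on (W :\ v) -> has_forced_triple W.
Proof.
move=> pd IH cW vW big dv nbv.
have [q qN] := connected_nbhd_nonempty cW vW (leq_trans (isT : 1 < 6) big).
have [r rN sN] := card_le2_pair dv qN.
have inWv x : x \in nbhd W v -> x \in W :\ v.
  by rewrite in_nbhd in_setD1 => /andP[xW evx]; rewrite xW andbT eq_sym edge_neq.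
have cover := component_cover cW vW sN.
case: (boolP (r \in component (W :\ v) q)) => rK.
  have eqK : W :\ v = component (W :\ v) q.
    apply/eqP; rewrite eqEsubset component_sub andbT.
    apply/subsetP => x /(subsetP cover); rewrite in_setU => /orP[//|].
    exact: component_trans rK.
  apply: (forced_triple_del_connected IH vW sN qN _ nbv).
  by rewrite {1}eqK; apply: component_connected; apply: inWv.
case: (classic (bipartite_on (component (W :\ v) q))) => [bipq|nbq].
  case: (classic (bipartite_on (component (W :\ v) r))) => [bipr|nbr].
    by case: nbv; apply: bipartite_on_two_components cover bipq bipr.
  have qKr : q \notin component (W :\ v) r by rewrite -component_sym ?inWv.
  apply: (forced_triple_del_split pd IH vW _ rN (inWv q qN) qKr nbr).
  by rewrite setUC.
exact: forced_triple_del_split pd IH vW sN qN (inWv r rN) rK nbq.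
Qed.

Lemma forced_triple_of_connected d : (forall x y, e x y -> d x != d y) ->
  forall W, connected_on W -> ~ bipartite_on W -> 6 <= #|W| -> has_forced_triple W.
Proof.
move=> pd W; have [n] := ubnP #|W|; elim: n W => // n IH W /ltnSE-Wn cW nbW big.
have IHW : forced_triple_below W.
  by move=> W' W'W; apply: IH; apply: leq_trans W'W Wn.
case: (classic (exists2 v, v \in W & #|nbhd W v| <= 2 /\ ~ bipartite_on (W :\ v)))
  => [[v vW [dv nbv]]|low_bip].
  exact: forced_triple_low_vertex pd IHW cW vW big dv nbv.
have hbip u : u \in W -> #|nbhd W u| <= 2 -> bipartite_on (W :\ u).
  by move=> uW du; apply: NNPP => nbu; apply: low_bip; exists u.
case: (classic (exists2 p, p \in W & #|nbhd W p| <= 2)) => [[p pW dp]|high_deg].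
  have deg2 u : u \in W -> 1 < #|nbhd W u|.
    move=> uW; rewrite ltnNge; apply/negP => du.
    exact: nonbip_del_low uW du nbW (hbip u uW (leq_trans du (leqnSn 1))).
  have [q [r [b cfg]]] := exists_deg2_config nbW pW (deg2 p pW) dp (hbip p pW dp).
  exact: forced_triple_deg2 cfg deg2 hbip big.
apply: (forced_triple_min_deg3 (d := d)) => [x y _ _ /pd //|//|v vW].
by rewrite ltnNge; apply/negP => dv; apply: high_deg; exists v.
Qed.

End ForcedTriples.

(** * Critical sets *)

Section CriticalSets.
Variables (T : finType) (e : rel T).

Lemma proper_colouringP k (c : {ffun T -> 'I_k}) :
  reflect (forall x y, e x y -> c x != c y) (proper_colouring e c).
Proof.
apply: (iffP forallP) => [h x y exy|h x].
  by move/forallP: (h x) => /(_ y) /implyP; apply.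
by apply/forallP => y; apply/implyP; apply: h.
Qed.

Lemma bipartite_of_small_colouring j (c : {ffun T -> 'I_j}) :
  j <= 2 -> proper_colouring e c -> bipartite_on e [set: T].
Proof.
move=> j2 /proper_colouringP pc; exists (fun x => val (c x) == 0) => x y _ _ exy.
move: (pc x y exy); case: (c x) (c y) => [a ha] [a' ha']; rewrite -val_eqE /=.
by case: a a' ha ha' => [|[|a]] [|[|a']] //= *; lia.
Qed.

Lemma colouring2_of_bipartite : bipartite_on e [set: T] ->
  exists c : {ffun T -> 'I_2}, proper_colouring e c.
Proof.
case=> b hb; exists [ffun x => if b x then @Ordinal 2 1 isT else @Ordinal 2 0 isT].
apply/proper_colouringP => x y exy; rewrite !ffunE.
by move: (hb x y (in_setT x) (in_setT y) exy); case: (b x); case: (b y).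
Qed.

Lemma chromatic_number_unique k k' :
  is_chromatic_number e k -> is_chromatic_number e k' -> k = k'.
Proof.
move=> [[c pc] nk] [[c' pc'] nk']; apply/eqP; rewrite eqn_leq.
apply/andP; split; rewrite leqNgt; apply/negP => lt.
- by move: (nk _ lt c'); rewrite pc'.
- by move: (nk' _ lt c); rewrite pc.
Qed.

Lemma exists_critical_sub k (c : {ffun T -> 'I_k}) (S : {set T}) : determining e c S ->
  exists2 S' : {set T}, S' \subset S & critical e c S'.
Proof.
move=> dS; pose P S0 := determining e c S0 && (S0 \subset S).
have PS : P S by rewrite /P dS subxx.
case: (@arg_minnP _ S P (fun S0 => #|S0|) PS) => S0 /andP[dS0 sS0] minS0.
exists S0 => //; rewrite /critical dS0; apply/forallP => S'; apply/implyP => ltS'.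
apply/negP => dS'; have := minS0 S'; rewrite /P dS' (subset_trans (proper_sub ltS') sS0).
by move=> /(_ isT); rewrite leqNgt proper_card.
Qed.

Lemma sn_le_determining m k (c : {ffun T -> 'I_k}) (S : {set T}) :
  is_sn e m -> is_chromatic_number e k -> proper_colouring e c -> determining e c S ->
  m <= #|S|.
Proof.
case=> k' [chik' [_ low]] chik pc dS; have ek := chromatic_number_unique chik' chik.
subst k'; have [S' sS' crit] := exists_critical_sub dS.
exact: leq_trans (low c S' pc crit) (subset_leq_card sS').
Qed.

End CriticalSets.

Section Forward.
Variables (T : finType) (e : rel T).
Hypotheses (e_sym : symmetric e) (e_irr : irreflexive e) (tf : triangle_free e).

Lemma forced_triple_sn_bound m : is_chromatic_number e 3 -> is_sn e m ->
  has_forced_triple e [set: T] -> m + 3 <= #|T|.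
Proof.
move=> chi sn [c [pc [U [_ cardU fU]]]].
pose cf : {ffun T -> 'I_3} := [ffun x => c x].
have pcf : proper_colouring e cf.
  by apply/proper_colouringP => x y exy; rewrite !ffunE; apply: pc.
have dS : determining e cf (~: U).
  apply/forallP => c'; apply/implyP => /andP[/proper_colouringP pc' /forall_inP agree].
  apply/eqP/ffunP => x; rewrite ffunE; apply: (fU c') (in_setT x) => [u w _ _ /pc' //|y _ yU].
  by apply/eqP; move: (agree y); rewrite inE yU ffunE; apply.
by rewrite -(cardsC U) cardU addnC leq_add2l (sn_le_determining sn chi pcf dS).
Qed.

Lemma connected_on_setT : connected_graph e -> connected_on e [set: T].
Proof.
move=> conn x y _ _; have E : edge_in e [set: T] =2 e by move=> u w; rewrite /edge_in !in_setT.
by rewrite (eq_connect E).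
Qed.

Lemma isomorphic_of_cycle5 g : cycle5 e g -> #|T| = 5 -> isomorphic_to_C5 e.
Proof.
move=> cg T5; have T5' : #|T| <= #|'I_5| by rewrite T5 card_ord.
have [f gK fK] := inj_card_bij (cycle5_inj cg) T5'.
exists f; split; first by exists g.
by move=> x y; rewrite -{1}(fK x) -{1}(fK y) cg.
Qed.

Lemma C5_of_sn_deficiency : connected_graph e -> is_chromatic_number e 3 ->
  is_sn e (#|T| - 2) -> isomorphic_to_C5 e.
Proof.
move=> conn chi sn; have [[d /proper_colouringP pd] no2] := chi.
have nbT : ~ bipartite_on e [set: T].
  by case/colouring2_of_bipartite => c pc; move: (no2 2 isT c); rewrite pc.
have T5 : #|T| = 5.
  move: (nonbip_card_ge5 e_sym e_irr tf nbT); rewrite cardsT leq_eqVlt.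
  case/orP=> [/eqP//|T6]; rewrite -cardsT in T6.
  have := forced_triple_of_connected e_sym e_irr tf pd (connected_on_setT conn) nbT T6.
  by move/(forced_triple_sn_bound chi sn); rewrite cardsT in T6; lia.
have [g [cg _]] := nonbip5_cycle e_sym e_irr tf nbT (etrans (cardsT T) T5).
exact: isomorphic_of_cycle5 cg T5.
Qed.

End Forward.

(** * The critical sets of C5 *)

Fixpoint words n : seq (seq nat) :=
  if n is n'.+1 then [seq a :: w | a <- iota 0 3, w <- words n'] else [:: [::]].

Lemma mem_words n s : (s \in words n) = (size s == n) && all (fun a => a < 3) s.
Proof.
elim: n s => [|n IH] s; first by case: s => [|a s]; rewrite inE.
apply/allpairsP/idP => [[[a w] [a3 wn ->]]|].
  by move: a3 wn; rewrite mem_iota IH /= => a3 /andP[/eqP-> ->]; rewrite eqxx a3.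
case: s => [|a s] //= /andP[/eqP[sn] /andP[a3 sa]].
exists (a, s); split => //=; last by rewrite IH sn eqxx sa.
by move: a3; rewrite !inE; case: a => [|[|[|a]]].
Qed.

(* A colouring of C5 is coded by the word of its colours, vertex i being
   adjacent to vertex i + 1 modulo 5. *)
Definition cyc5_proper (s : seq nat) :=
  all (fun i => nth 0 s i != nth 0 s ((i + 1) %% 5)) (iota 0 5).

Definition C5_colourings := filter cyc5_proper (words 5).

Lemma C5_two_vertices_undetermined : all (fun s => all (fun i => all (fun j =>
  has (fun t => [&& nth 0 t i == nth 0 s i, nth 0 t j == nth 0 s j & t != s]) C5_colourings)
  (iota 0 5)) (iota 0 5)) C5_colourings.
Proof. by vm_compute. Qed.

Section Backward.
Variables (T : finType) (e : rel T) (f : T -> 'I_5) (g : 'I_5 -> T).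
Hypotheses (fK : cancel f g) (gK : cancel g f).
Hypothesis ef : forall x y, e x y = C5_adj (f x) (f y).

Lemma cycle5_inverse : cycle5 e g.
Proof. by move=> i j; rewrite ef !gK. Qed.

Lemma C5_connected : connected_graph e.
Proof.
have e_sym : symmetric e by move=> x y; rewrite !ef C5_adj_sym.
have from0 i : connect e (g ord0) (g i).
  case: i => n; elim: n => [|n IH] lt.
    by rewrite (_ : Ordinal lt = ord0) ?connect0 //; apply: val_inj.
  apply: connect_trans (IH (ltnW lt)) (connect1 _).
  by rewrite cycle5_inverse /C5_adj /= modn_small // eqxx.
move=> x y; rewrite -(fK x) -(fK y).
by apply: connect_trans (from0 _); rewrite (sym_connect_sym e_sym) from0.
Qed.

Lemma C5_triangle_free : triangle_free e.
Proof.
move=> x y z; rewrite !ef.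
by case: (f x) (f y) (f z) => [[|[|[|[|[|?]]]]] ?] [[|[|[|[|[|?]]]]] ?] [[|[|[|[|[|?]]]]] ?].
Qed.

Definition C5_standard_colouring : {ffun T -> 'I_3} := [ffun x => C5_colour (f x)].

Lemma C5_standard_proper : proper_colouring e C5_standard_colouring.
Proof. by apply/proper_colouringP => x y; rewrite ef !ffunE; apply: C5_colour_proper. Qed.

Lemma C5_chromatic : is_chromatic_number e 3.
Proof.
split; first by exists C5_standard_colouring; apply: C5_standard_proper.
move=> j j3 c; apply/negP => /(bipartite_of_small_colouring j3).
apply: (odd5_nonbip (v0 := g (C5v 0)) (v1 := g (C5v 1)) (v2 := g (C5v 2))
                    (v3 := g (C5v 3)) (v4 := g (C5v 4))); by rewrite ?in_setT ?cycle5_inverse.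
Qed.

Definition colour_word (c : T -> 'I_3) := [seq val (c (g (inord i))) | i <- iota 0 5].

Lemma nth_colour_word c (i : 'I_5) : nth 0 (colour_word c) i = c (g i).
Proof. by rewrite (nth_map 0) ?size_iota // nth_iota // add0n inord_val. Qed.

Lemma colour_word_mem c : (forall x y, e x y -> c x != c y) -> colour_word c \in C5_colourings.
Proof.
move=> pc; rewrite mem_filter mem_words size_map size_iota eqxx andTb; apply/andP; split.
  apply/allP => i; rewrite mem_iota add0n => /andP[_ i5].
  rewrite -[i]/(nat_of_ord (Ordinal i5)) -[(_ + 1) %% 5]/(nat_of_ord (rot5 (C5v 1) (Ordinal i5))).
  by rewrite !nth_colour_word; apply: pc; rewrite cycle5_inverse C5_adj_succ.
by apply/allP => a /mapP[i _ ->]; apply: ltn_ord.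
Qed.

Definition word_colouring (t : seq nat) : {ffun T -> 'I_3} := [ffun x => inord (nth 0 t (f x))].

Lemma word_colouring_val t x : t \in C5_colourings -> word_colouring t x = nth 0 t (f x) :> nat.
Proof.
rewrite mem_filter mem_words => /and3P[_ /eqP t5 t3]; rewrite ffunE inordK //.
by apply: (allP t3); apply: mem_nth; rewrite t5.
Qed.

Lemma word_colouring_proper t : t \in C5_colourings -> proper_colouring e (word_colouring t).
Proof.
move=> tC; have /andP[tp _] : cyc5_proper t && (t \in words 5) by rewrite -mem_filter.
have step (i : 'I_5) : nth 0 t i != nth 0 t (rot5 (C5v 1) i).
  by move: (allP tp i); rewrite mem_iota add0n ltn_ord; apply.
have adj i j : C5_adj i j -> nth 0 t i != nth 0 t j.
  by case/C5_adj_cases => ->; [apply: step | rewrite eq_sym; apply: step].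
by apply/proper_colouringP => x y; rewrite ef -val_eqE /= !word_colouring_val //; apply: adj.
Qed.

Lemma C5_small_undetermined (c : {ffun T -> 'I_3}) (S : {set T}) :
  proper_colouring e c -> #|S| <= 2 -> ~~ determining e c S.
Proof.
move=> pc S2; have [x [y sS]] := card_le2_sub (g ord0) S2.
have /proper_colouringP pc' := pc; have sC := colour_word_mem pc'.
have /hasP[t tC /and3P[tx ty ts]] : has (fun t => [&& nth 0 t (f x) == nth 0 (colour_word c) (f x),
    nth 0 t (f y) == nth 0 (colour_word c) (f y) & t != colour_word c]) C5_colourings.
  move: (allP C5_two_vertices_undetermined _ sC) => /allP/(_ (f x)).
  by rewrite mem_iota ltn_ord => /(_ isT)/allP/(_ (f y)); rewrite mem_iota ltn_ord; apply.
have wt z : word_colouring t z = nth 0 t (f z) :> nat := word_colouring_val z tC.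
have t5 : size t = 5 by move: tC; rewrite mem_filter mem_words => /and3P[_ /eqP].
apply/negP => /forallP/(_ (word_colouring t)); rewrite word_colouring_proper //=.
have -> : [forall s in S, word_colouring t s == c s].
  apply/forall_inP => s /(subsetP sS); rewrite -val_eqE /= wt.
  by case/set2P => ->; rewrite ?(eqP tx) ?(eqP ty) nth_colour_word fK.
move=> /eqP wc; move: ts; rewrite -wc; apply/negP; rewrite negbK; apply/eqP.
apply: (@eq_from_nth _ 0); rewrite ?size_map ?size_iota // => i; rewrite t5 => i5.
by rewrite -[i]/(nat_of_ord (Ordinal i5)) nth_colour_word wt gK.
Qed.

Lemma C5_sn : is_sn e 3.
Proof.
have ginj : injective g := can_inj gK.
exists 3; split; first exact: C5_chromatic.
split; last first.
  move=> c S pc /andP[dS _]; rewrite leqNgt; apply: contraL dS => S2.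
  exact: C5_small_undetermined pc S2.
set S := [set g (C5v 0); g (C5v 1); g (C5v 3)].
have cardS : #|S| = 3 by rewrite /S -setUA cardsU1 cards2 !inE !(inj_eq ginj).
exists C5_standard_colouring, S; split; first exact: C5_standard_proper.
split => //; apply/andP; split; last first.
  apply/forallP => S'; apply/implyP => ltS'; apply: C5_small_undetermined C5_standard_proper _.
  by move: (proper_card ltS'); rewrite cardS.
apply/forallP => c'; apply/implyP => /andP[/proper_colouringP pc' /forall_inP agree].
have fix_at i : g i \in S -> c' (g i) = C5_colour i.
  by move=> giS; rewrite (eqP (agree _ giS)) ffunE gK.
have [a0 a1 a3] : [/\ c' (g (C5v 0)) = col0, c' (g (C5v 1)) = col1 & c' (g (C5v 3)) = col2].
  by rewrite !fix_at // !inE eqxx ?orbT.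
have adj i j : C5_adj i j -> c' (g i) != c' (g j).
  by move=> ij; apply: pc'; rewrite cycle5_inverse.
apply/eqP/ffunP => x; rewrite ffunE -{1}(fK x); move: (f x); apply: ord5_ind => //.
- by apply: (ord3_other (a := col1) (b := col2)); rewrite // -?a1 -?a3 adj.
- by apply: (ord3_other (a := col2) (b := col0)); rewrite // -?a3 -?a0 adj.
Qed.

End Backward.

Theorem proposition2 (T : finType) (e : rel T)
    (e_sym : symmetric e) (e_irr : irreflexive e) :
  (connected_graph e /\ triangle_free e /\ is_chromatic_number e 3 /\
   is_sn e (#|T| - 2)) <-> isomorphic_to_C5 e.
Proof.
split=> [[conn [tf [chi sn]]]|[f [[g fK gK] ef]]].
  exact: C5_of_sn_deficiency e_sym e_irr tf conn chi sn.
have -> : #|T| = 5 by rewrite (bij_eq_card (f := f)) ?card_ord //; exists g.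
split; first exact: C5_connected fK gK ef.
split; first exact: C5_triangle_free ef.
split; first exact: C5_chromatic gK ef.
exact: C5_sn fK gK ef.
Qed.
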